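(* Let $A$ be a finite set with $N\ge 2$ elements and let $(v_{xy})$ be a Llull matrix on $A$ with CLC structure that is not identically zero. Let $\xi$ be any admissible order, let $\rho_x=\frac{1}{N-1}\sum_{y\neq x}v_{xy}$ be the mean preference scores, and let $X$ be the top dominant irreducible component of $A$. Then for all distinct $x,y\in A$: (a) if $x<_\xi y$ then $\rho_x\ge\rho_y$; (b) $\rho_x=\rho_y$ if and only if $v_{xy}=v_{yx}$; (c) if $\rho_x\ge\rho_y$ then $v_{xy}\ge v_{yx}$, and $v_{xz}\ge v_{yz}$ and $v_{zx}\le v_{zy}$ for every $z\notin\{x,y\}$; (d) $\rho_x>\rho_y$ if and only if $v_{xy}>v_{yx}$; (e) if $v_{xy}>v_{yx}$ then $x<_\xi y$; (f) $\rho_x>\rho_y$ whenever $x\in X$ and $y\notin X$.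
   Context: A Llull matrix on a finite set $A$ is an assignment to each ordered pair of distinct elements $x\neq y$ of $A$ of a number $v_{xy}\in[0,1]$ such that $v_{xy}+v_{yx}\le 1$. Turnouts: $t_{xy}=v_{xy}+v_{yx}$; margins: $m_{xy}=v_{xy}-v_{yx}$. The matrix has CLC structure if there is a total order $\xi$ on $A$ (an admissible order) such that, writing $x<_\xi y$ when $x$ precedes $y$ and $x'$ for the immediate successor of $x$ in $\xi$ (when it exists): (i) $v_{xy}\ge v_{yx}$ whenever $x<_\xi y$; (ii) $v_{xz}=\max(v_{xy},v_{yz})$ whenever $x<_\xi y<_\xi z$; (iii) $v_{zx}=\min(v_{zy},v_{yx})$ whenever $x<_\xi y<_\xi z$; (iv) $0\le t_{xz}-t_{x'z}\le m_{xx'}$ whenever $x'$ exists and $z\notin\{x,x'\}$. Indirect scores: for $x\neq y$, $\hat v_{xy}=\max$ over all paths $x=x_0,\dots,x_n=y$ of $\min_{0\le i<n} v_{x_ix_{i+1}}$. Irreducible components are the classes of the equivalence relation $x\sim y$ iff $x=y$ or ($\hat v_{xy}>0$ and $\hat v_{yx}>0$). $x$ dominates $y$ iff $\hat v_{xy}>0$ and $\hat v_{yx}=0$; this passes to components. A top dominant irreducible component is an irreducible component dominating every other one; for a non-vanishing Llull matrix with CLC structure such a component exists (and is unique). *)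

From HB Require Import structures.
From mathcomp Require Import all_boot all_order all_algebra.
From mathcomp Require Import boolp classical_sets reals.
Set Implicit Arguments. Unset Strict Implicit. Unset Printing Implicit Defensive.
Import Order.TTheory GRing.Theory Num.Theory.
Local Open Scope ring_scope.
Local Open Scope classical_set_scope.

Section Llull.
Variables (R : realType) (T : finType).
Implicit Types (v : T -> T -> R) (s : seq T) (x y z : T).

Definition llull v : Prop :=
  forall x y, x != y -> [/\ 0 <= v x y, v x y <= 1 & v x y + v y x <= 1].

Definition turnout v x y := v x y + v y x.
Definition margin v x y := v x y - v y x.

(* A total order on T, given as an enumeration s of all elements of T without
   repetition: x <_s y iff x occurs before y in s. *)
Definition total_order_seq s : Prop := uniq s /\ (forall x, x \in s).
Definition olt s x y : bool := (index x s < index y s)%N.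
Definition has_succ s x : bool := ((index x s).+1 < size s)%N.
Definition succ s x : T := nth x s (index x s).+1.

Definition admissible v s : Prop :=
  [/\ total_order_seq s,
      (forall x y, olt s x y -> v y x <= v x y),
      (forall x y z, olt s x y -> olt s y z -> v x z = Num.max (v x y) (v y z)),
      (forall x y z, olt s x y -> olt s y z -> v z x = Num.min (v z y) (v y x)) &
      (forall x z, has_succ s x -> z != x -> z != succ s x ->
         0 <= turnout v x z - turnout v (succ s x) z /\
         turnout v x z - turnout v (succ s x) z <= margin v x (succ s x))].

Definition CLC v : Prop := exists s, admissible v s.

Definition nonvanishing v : Prop := exists x y, x != y /\ v x y != 0.

(* A path x = x0, x1, ..., xn = y (n >= 1) is given by x and the nonempty list
   [x1; ...; xn] with last element y; its strength is the minimum of the links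
   (all links lie in [0,1] for a Llull matrix, so 1 is a neutral start value). *)
Definition path_strength v x (p : seq T) : R :=
  \big[Num.min/1]_(e <- zip (x :: p) p) v e.1 e.2.

Definition indirect v x y : R :=
  sup [set r : R | exists p : seq T,
         [/\ p != [::], last x p = y & r = path_strength v x p]].

Definition irr_equiv v x y : Prop :=
  x = y \/ (0 < indirect v x y /\ 0 < indirect v y x).

Definition irr_component v (C : {set T}) : Prop :=
  exists x, forall y, y \in C <-> irr_equiv v x y.

Definition dominates v x y : Prop := 0 < indirect v x y /\ indirect v y x = 0.

Definition comp_dominates v (C D : {set T}) : Prop :=
  exists x y, [/\ x \in C, y \in D & dominates v x y].

Definition top_dominant_component v (X : {set T}) : Prop :=
  irr_component v X /\
  forall D, irr_component v D -> D != X -> comp_dominates v X D.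

Definition rho v x : R := (#|T|.-1)%:R^-1 * \sum_(y | y != x) v x y.

End Llull.

From HB Require Import structures.
From mathcomp Require Import all_boot all_order all_algebra perm.
From mathcomp Require Import boolp classical_sets reals.
From mathcomp Require Import lra zify.
Set Implicit Arguments. Unset Strict Implicit. Unset Printing Implicit Defensive.
Import Order.TTheory GRing.Theory Num.Theory.
Local Open Scope ring_scope.
Local Open Scope classical_set_scope.

(* Say that x weakly beats y when v_yx <= v_xy and, for every third z,
   v_yz <= v_xz and v_zx <= v_zy.  Along an admissible order every element
   weakly beats every later one: (ii) and (iii) give this when z lies outside
   the pair, and (iv), applied at the two neighbours of z, when z lies between
   them.  The same axioms show that a tie v_xy = v_yx makes x and y twins,
   i.e. interchangeable in the whole matrix.  Comparing row sums then yields
   (a)-(e).  For (f), no positive path leads from y back to the top component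
   X, whereas rho_y >= rho_x would give either a positive link y -> x or twins
   x, y, and the transposition of twins maps a positive path x -> y onto a
   positive path y -> x. *)

Lemma homo_connect (T : finType) (e : rel T) (f : T -> T) :
  {homo f : a b / e a b} -> {homo f : a b / connect e a b}.
Proof.
move=> hom a _ /connectP[p ep ->]; elim: p a ep => [|c p IH] a /=.
  by rewrite connect0.
by case/andP=> /hom/connect1/connect_trans + /IH; apply.
Qed.

Section Reachability.
Variables (R : realType) (T : finType) (v : T -> T -> R).
Implicit Types (x y : T) (p : seq T).

Definition pos_link : rel T := fun x y => (x != y) && (0 < v x y).

Lemma path_strength_cons x y p :
  path_strength v x (y :: p) = Num.min (v x y) (path_strength v y p).
Proof. by rewrite /path_strength /= big_cons. Qed.

Lemma path_strength_le1 x p : path_strength v x p <= 1.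
Proof.
elim: p x => [|y p IH] x; first by rewrite /path_strength big_nil.
by rewrite path_strength_cons ge_min IH orbT.
Qed.

Lemma connect_path_strength_gt0 x p :
  0 < path_strength v x p -> connect pos_link x (last x p).
Proof.
elim: p x => [|y p IH] x /=; first by rewrite connect0.
rewrite path_strength_cons lt_min => /andP[vxy /IH]; apply: connect_trans.
have [<-|xy] := eqVneq x y; first exact: connect0.
by apply: connect1; rewrite /pos_link xy.
Qed.

Lemma path_strength_gt0 x p : path pos_link x p -> 0 < path_strength v x p.
Proof.
elim: p x => [|y p IH] x /=; first by rewrite /path_strength big_nil.
by case/andP=> /andP[_ vxy] /IH; rewrite path_strength_cons lt_min vxy.
Qed.

Lemma indirect_gt0 x y : x != y -> 0 < indirect v x y <-> connect pos_link x y.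
Proof.
move=> xy; rewrite /indirect; set E := [set _ | _].
have E0 : E !=set0 by exists (path_strength v x [:: y]), [:: y].
split.
  by case/(sup_gt E0) => _ [p [_ <- ->]]; apply: connect_path_strength_gt0.
case/connectP=> p pxp yE; apply: lt_le_trans (path_strength_gt0 pxp) _.
apply: ub_le_sup; first by exists 1 => _ [q [_ _ ->]]; apply: path_strength_le1.
by exists p; split=> //; apply: contra_neq xy => p0; rewrite yE p0.
Qed.

Lemma irr_equiv_connect x y :
  irr_equiv v x y -> connect pos_link x y /\ connect pos_link y x.
Proof.
case=> [<-|[xy yx]]; first by rewrite connect0.
have [<-|nxy] := eqVneq x y; first by rewrite connect0.
by split; apply/indirect_gt0; rewrite // eq_sym.
Qed.

Lemma top_component_reach X x y : top_dominant_component v X ->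
  x \in X -> y \notin X -> connect pos_link x y /\ ~ connect pos_link y x.
Proof.
case=> -[x0 X_x0] top xX yNX.
pose D := [set w | `[< irr_equiv v y w >]]%SET.
have D_y : forall w, w \in D <-> irr_equiv v y w by move=> w; rewrite inE; split => /asboolP.
have yD : y \in D by apply/D_y; left.
have DX : D != X by apply: contraNneq yNX => <-.
have [a [b [aX bD [ab ba]]]] := top D (ex_intro _ y D_y) DX.
have neq_ab : a != b by apply: contraTneq ab => eab; move: ba; rewrite eab => ->; rewrite ltxx.
have {}ab : connect pos_link a b by apply/indirect_gt0.
have [_ xx0] := irr_equiv_connect (proj1 (X_x0 x) xX).
have [x0a _] := irr_equiv_connect (proj1 (X_x0 a) aX).
have [yb b_y] := irr_equiv_connect (proj1 (D_y b) bD).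
split; first by apply: connect_trans (connect_trans xx0 (connect_trans x0a ab)) b_y.
move=> yx; suff : 0 < indirect v b a by rewrite ba ltxx.
apply/indirect_gt0; first by rewrite eq_sym.
by apply: connect_trans (connect_trans b_y yx) (connect_trans xx0 x0a).
Qed.

End Reachability.

Section Comparisons.
Variables (R : realType) (T : finType) (v : T -> T -> R).
Implicit Types x y z : T.

Definition better_at x y z : Prop := v y z <= v x z /\ v z x <= v z y.

Definition weakly_beats x y : Prop :=
  v y x <= v x y /\ forall z, z != x -> z != y -> better_at x y z.

Definition twins x y : Prop :=
  v x y = v y x /\ forall z, z != x -> z != y -> v x z = v y z /\ v z x = v z y.

Lemma better_at_trans x w y z : better_at x w z -> better_at w y z -> better_at x y z.
Proof. by move=> [xw1 xw2] [wy1 wy2]; split; [apply: le_trans xw1 | apply: le_trans wy2]. Qed.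

Lemma twins_sym x y : twins x y -> twins y x.
Proof.
by case=> vxy tw; split=> // z zy zx; have [-> ->] := tw z zx zy.
Qed.

Lemma twins_weakly_beats x y : twins x y -> weakly_beats x y.
Proof.
case=> vxy tw; split=> [|z zx zy]; first by rewrite vxy.
by rewrite /better_at; have [-> ->] := tw z zx zy.
Qed.

Lemma twins_trans x w y : x != y -> twins x w -> twins w y -> twins x y.
Proof.
move=> xy xw_twins wy_twins.
have [exw|wx] := eqVneq w x; first by rewrite -exw.
have [ewy|wy'] := eqVneq w y; first by rewrite -ewy.
case: xw_twins wy_twins => xw twx [wy twy].
have [xwy ywx] : v x y = v w y /\ v y x = v y w by apply: twx; rewrite // eq_sym.
have [wyx _] : v w x = v y x /\ v x w = v x y by apply: twy; rewrite // eq_sym.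
split; first by rewrite xwy wy -ywx.
move=> z zx zy; have [->|zw] := eqVneq z w.
  by split; rewrite ?xw wyx ywx ?wy.
by have [-> ->] := twx z zx zw; apply: twy.
Qed.

Lemma twins_tperm x y a b : twins x y -> a != b ->
  v (tperm x y a) (tperm x y b) = v a b.
Proof.
case=> vxy tw; have tw' c : c <> x -> c <> y -> v x c = v y c /\ v c x = v c y.
  by move=> /eqP cx /eqP cy; apply: tw.
case: tpermP => [->|->|ax ay]; case: tpermP => [->|->|bx b_y];
  rewrite ?eqxx // => _.
1-2: by case: (tw' b bx b_y) => ->.
all: by case: (tw' a ax ay) => _ ->.
Qed.

Lemma twins_connect x y : twins x y ->
  connect (pos_link v) x y -> connect (pos_link v) y x.
Proof.
move=> twxy /(homo_connect (f := tperm x y)); rewrite tpermL tpermR; apply.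
move=> a b /andP[ab vab]; rewrite /pos_link (inj_eq perm_inj) ab.
by rewrite twins_tperm.
Qed.

Let c : R := (#|T|.-1)%:R^-1.

Lemma rho_scale_gt0 x y : x != y -> 0 < c.
Proof.
move=> xy; have : (1 < #|T|)%N by apply/card_gt1P; exists x, y.
by rewrite invr_gt0 ltr0n; lia.
Qed.

Lemma rhoB x y : x != y -> rho v x - rho v y =
  c * (v x y - v y x + \sum_(z | (z != x) && (z != y)) (v x z - v y z)).
Proof.
move=> xy; rewrite /rho -/c -mulrBr; congr (_ * _).
rewrite (bigD1 y) 1?eq_sym //= [in X in _ - X](bigD1 x) //= sumrB.
rewrite [X in _ - (_ + X)](eq_bigl (fun z => (z != x) && (z != y))) => [|z].
  lra.
by rewrite andbC.
Qed.

Lemma sum_weakly_beats_ge0 x y : weakly_beats x y ->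
  0 <= \sum_(z | (z != x) && (z != y)) (v x z - v y z).
Proof.
by case=> _ wb; apply: sumr_ge0 => z /andP[zx zy]; rewrite subr_ge0; case: (wb z zx zy).
Qed.

Lemma rho_le_weakly_beats x y : x != y -> weakly_beats x y -> rho v y <= rho v x.
Proof.
move=> xy wb; rewrite -subr_ge0 (rhoB xy) mulr_ge0 ?(ltW (rho_scale_gt0 xy)) //.
by rewrite addr_ge0 ?sum_weakly_beats_ge0 // subr_ge0; case: wb.
Qed.

Lemma tie_of_rho_eq x y : x != y -> weakly_beats x y -> rho v x = rho v y ->
  v x y = v y x.
Proof.
move=> xy wb /eqP; rewrite -subr_eq0 (rhoB xy) mulf_eq0 gt_eqF ?(rho_scale_gt0 xy) //=.
rewrite paddr_eq0 ?sum_weakly_beats_ge0 ?subr_ge0 //; last by case: wb.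
by case/andP; rewrite subr_eq0 => /eqP.
Qed.

Lemma rho_eq_twins x y : x != y -> twins x y -> rho v x = rho v y.
Proof.
move=> xy [vxy tw]; apply/eqP; rewrite -subr_eq0 (rhoB xy) vxy subrr add0r.
by rewrite big1 ?mulr0 // => z /andP[zx zy]; have [-> _] := tw z zx zy; rewrite subrr.
Qed.

End Comparisons.

Section Enumeration.
Variables (T : finType) (s : seq T).
Hypothesis s_total : total_order_seq s.
Implicit Types x y z p : T.

Lemma index_injective x y : index x s = index y s -> x = y.
Proof. by case: s_total => _ s_all; apply: index_inj. Qed.

Lemma olt_total x y : x != y -> olt s x y \/ olt s y x.
Proof.
rewrite /olt => xy; case: ltngtP => [|| /index_injective exy]; [left | right |] => //.
by rewrite exy eqxx in xy.
Qed.

Lemma olt_neq x y : olt s x y -> x != y.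
Proof. by apply: contraTneq => ->; rewrite /olt ltnn. Qed.

Lemma olt_neq_sym x y : olt s x y -> y != x.
Proof. by rewrite eq_sym; apply: olt_neq. Qed.

Lemma olt_trans x y z : olt s x y -> olt s y z -> olt s x z.
Proof. exact: ltn_trans. Qed.

Lemma has_succ_olt x y : olt s x y -> has_succ s x.
Proof. by rewrite /olt /has_succ => /leq_ltn_trans; apply; rewrite index_mem s_total.2. Qed.

Lemma index_succ x : has_succ s x -> index (succ s x) s = (index x s).+1.
Proof. by move=> sx; rewrite /succ index_uniq //; case: s_total. Qed.

Lemma olt_succ x : has_succ s x -> olt s x (succ s x).
Proof. by move=> sx; rewrite /olt index_succ. Qed.

Lemma olt_succ_l x y : olt s x y -> succ s x != y -> olt s (succ s x) y.
Proof.
move=> xy sxy; have sx := has_succ_olt xy.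
have : index (succ s x) s != index y s by apply: contra_neq sxy => /index_injective.
by move: xy; rewrite /olt index_succ //; lia.
Qed.

Lemma exists_pred z : (0 < index z s)%N -> exists2 p, has_succ s p & succ s p = z.
Proof.
case: s_total => s_uniq s_all z_gt0; set i := (index z s).-1.
have i_lt : (i < size s)%N by rewrite /i (leq_ltn_trans (leq_pred _)) ?index_mem.
have idx_p : index (nth z s i) s = i by rewrite index_uniq.
exists (nth z s i); first by rewrite /has_succ idx_p prednK ?index_mem.
by rewrite /succ idx_p prednK // (set_nth_default z) ?index_mem // nth_index.
Qed.

Lemma olt_pred x p : has_succ s p -> olt s x (succ s p) -> x != p -> olt s x p.
Proof.
move=> sp xsp xp; have : index x s != index p s by apply: contra_neq xp => /index_injective.
by move: xsp; rewrite /olt index_succ //; lia.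
Qed.

End Enumeration.

Section Admissible.
Variables (R : realType) (T : finType) (v : T -> T -> R) (s : seq T).
Hypothesis adm : admissible v s.
Implicit Types x y z p : T.

Let s_total : total_order_seq s. Proof. by case: adm. Qed.

Let olt_le x y : olt s x y -> v y x <= v x y.
Proof. by case: adm => _ + _ _ _; apply. Qed.

Let olt_max x y z : olt s x y -> olt s y z -> v x z = Num.max (v x y) (v y z).
Proof. by case: adm => _ _ + _ _; apply. Qed.

Let olt_min x y z : olt s x y -> olt s y z -> v z x = Num.min (v z y) (v y x).
Proof. by case: adm => _ _ _ + _; apply. Qed.

Let turnout_succ x z : has_succ s x -> z != x -> z != succ s x ->
  0 <= turnout v x z - turnout v (succ s x) z /\
  turnout v x z - turnout v (succ s x) z <= margin v x (succ s x).
Proof. by case: adm => _ _ _ _; apply. Qed.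

Lemma better_at_left z x y : olt s z x -> olt s x y -> better_at v x y z.
Proof.
move=> zx xy; rewrite /better_at (olt_min zx xy) (olt_max zx xy).
by rewrite ge_min le_max !lexx orbT.
Qed.

Lemma better_at_right x y z : olt s x y -> olt s y z -> better_at v x y z.
Proof.
move=> xy yz; rewrite /better_at (olt_max xy yz) (olt_min xy yz).
by rewrite le_max ge_min !lexx orbT.
Qed.

(* Property (iv) at p and at its successor z compares the two neighbours of z. *)
Lemma better_at_neighbours p : has_succ s p -> has_succ s (succ s p) ->
  better_at v p (succ s (succ s p)) (succ s p).
Proof.
move=> sp sz; set z := succ s p; set q := succ s z.
have pz : olt s p z := olt_succ s_total sp.
have zq : olt s z q := olt_succ s_total sz.
have pq := olt_trans pz zq.
have [tp1 tp2] := turnout_succ sp (olt_neq_sym pq) (olt_neq_sym zq).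
have [tz1 tz2] := turnout_succ sz (olt_neq pz) (olt_neq pq).
move: tp1 tp2 tz1 tz2 (olt_le pz) (olt_le zq).
rewrite /turnout /margin -/z -/q (olt_max pz zq) (olt_min pz zq) /better_at.
by case: (leP (v p z) (v z q)); case: (leP (v q z) (v z p)) => *; lra.
Qed.

Lemma better_at_between x z y : olt s x z -> olt s z y -> better_at v x y z.
Proof.
move=> xz zy; have sz := has_succ_olt s_total zy.
have [p sp pz] : exists2 p, has_succ s p & succ s p = z.
  by apply: (exists_pred s_total); move: xz; rewrite /olt; lia.
have mid := better_at_neighbours sp; rewrite pz in mid; have {}mid := mid sz.
have left : better_at v x p z.
  have [<-|xp] := eqVneq x p; first by split.
  by apply: better_at_right; [apply: olt_pred; rewrite ?pz | rewrite -pz olt_succ].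
have right : better_at v (succ s z) y z.
  have [->|zy'] := eqVneq (succ s z) y; first by split.
  by apply: better_at_left; [apply: olt_succ | apply: olt_succ_l].
exact: better_at_trans left (better_at_trans mid right).
Qed.

Lemma weakly_beats_olt x y : olt s x y -> weakly_beats v x y.
Proof.
move=> xy; split=> [|z zx zy]; first exact: olt_le.
case: (olt_total s_total zx) => [zx'|xz]; first exact: better_at_left.
case: (olt_total s_total zy) => [zy'|yz]; first exact: better_at_between.
exact: better_at_right.
Qed.

Lemma tie_between x z y : olt s x z -> olt s z y -> v x y = v y x ->
  v x z = v z x /\ v z y = v y z.
Proof.
move=> xz zy; rewrite (olt_max xz zy) (olt_min xz zy).
move: (olt_le xz) (olt_le zy).
by case: (leP (v x z) (v z y)); case: (leP (v y z) (v z x)) => *; lra.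
Qed.

Lemma twins_succ x : has_succ s x -> v x (succ s x) = v (succ s x) x ->
  twins v x (succ s x).
Proof.
move=> sx tie; split=> // z zx zx'; set x' := succ s x in tie zx' *.
have xx' : olt s x x' := olt_succ s_total sx.
have [t1 t2] := turnout_succ sx zx zx'; move: t1 t2; rewrite /turnout /margin -/x' tie subrr.
case: (olt_total s_total zx) => [zx1|xz].
  rewrite (olt_max zx1 xx') (olt_min zx1 xx') tie; move: (olt_le zx1).
  by case: (leP (v z x) (v x' x)); case: (leP (v x' x) (v x z)) => *; split; lra.
case: (olt_total s_total zx') => [zx2|x'z].
  by move: xz zx2; rewrite /olt index_succ //; lia.
rewrite (olt_max xx' x'z) (olt_min xx' x'z) tie; move: (olt_le x'z).
by case: (leP (v x' x) (v x' z)); case: (leP (v z x') (v x' x)) => *; split; lra.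
Qed.

Lemma twins_of_tie x y : olt s x y -> v x y = v y x -> twins v x y.
Proof.
move=> xy; have [n] : exists n, (index y s - index x s)%N = n.+1.
  by exists (index y s - index x s).-1; move: xy; rewrite /olt; lia.
elim: n x xy => [|n IH] x xy dist tie; have sx := has_succ_olt s_total xy.
  have sxy : succ s x = y.
    by apply: (index_injective s_total); rewrite index_succ //; lia.
  by rewrite -sxy in tie *; apply: twins_succ.
have x'y : olt s (succ s x) y by move: dist; rewrite /olt index_succ //; lia.
have [tie1 tie2] := tie_between (olt_succ s_total sx) x'y tie.
apply: twins_trans (olt_neq xy) (twins_succ sx tie1) (IH _ x'y _ tie2).
by move: dist; rewrite index_succ //; lia.
Qed.

Lemma rho_le_olt x y : olt s x y -> rho v y <= rho v x.
Proof. by move=> xy; apply: rho_le_weakly_beats (olt_neq xy) (weakly_beats_olt xy). Qed.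

Lemma twins_of_rho_eq x y : x != y -> rho v x = rho v y -> twins v x y.
Proof.
move=> xy rxy; case: (olt_total s_total xy) => [lt_xy|lt_yx].
  exact/twins_of_tie/(tie_of_rho_eq (olt_neq lt_xy) (weakly_beats_olt lt_xy)).
apply/twins_sym/twins_of_tie => //.
exact: tie_of_rho_eq (olt_neq lt_yx) (weakly_beats_olt lt_yx) (esym rxy).
Qed.

Lemma rho_eq_iff_tie x y : x != y -> rho v x = rho v y <-> v x y = v y x.
Proof.
move=> xy; split=> [/(twins_of_rho_eq xy) []//|tie].
case: (olt_total s_total xy) => [lt_xy|lt_yx].
  exact/(rho_eq_twins xy)/twins_of_tie.
by apply/esym/(rho_eq_twins (olt_neq lt_yx))/twins_of_tie.
Qed.

Lemma weakly_beats_of_rho_le x y : x != y -> rho v y <= rho v x -> weakly_beats v x y.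
Proof.
move=> xy ryx; case: (olt_total s_total xy) => [|yx]; first exact: weakly_beats_olt.
apply/twins_weakly_beats/(twins_of_rho_eq xy)/eqP.
by rewrite eq_le ryx rho_le_olt.
Qed.

Lemma rho_lt_iff x y : x != y -> rho v y < rho v x <-> v y x < v x y.
Proof.
move=> xy; split=> lt_yx.
  rewrite lt_neqAle (weakly_beats_of_rho_le xy (ltW lt_yx)).1 andbT.
  by apply: contraTneq lt_yx => /esym/(rho_eq_iff_tie xy) ->; rewrite ltxx.
have yx : y != x by rewrite eq_sym.
by rewrite ltNge; apply: contraTN lt_yx => /(weakly_beats_of_rho_le yx) [+ _]; rewrite -leNgt.
Qed.

Lemma olt_of_lt x y : v y x < v x y -> olt s x y.
Proof.
move=> lt_yx; have xy : x != y by apply: contraTneq lt_yx => ->; rewrite ltxx.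
case: (olt_total s_total xy) => // /olt_le.
by rewrite leNgt lt_yx.
Qed.

Lemma connect_of_rho_le x y : llull v -> x != y -> rho v x <= rho v y ->
  connect (pos_link v) x y -> connect (pos_link v) y x.
Proof.
move=> hv xy; rewrite le_eqVlt => /orP[/eqP/(twins_of_rho_eq xy)|]; first exact: twins_connect.
have yx : y != x by rewrite eq_sym.
rewrite (rho_lt_iff yx) => lt_xy _; apply: connect1.
by rewrite /pos_link eq_sym xy (le_lt_trans _ lt_xy) //; case: (hv x y xy).
Qed.

Lemma rho_lt_top_component X x y : llull v -> top_dominant_component v X ->
  x \in X -> y \notin X -> rho v y < rho v x.
Proof.
move=> hv top xX yNX; have xy : x != y by apply: contraNneq yNX => <-.
have [xy_reach yx_unreach] := top_component_reach top xX yNX.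
by rewrite ltNge; apply/negP => le; apply/yx_unreach/(connect_of_rho_le hv xy).
Qed.

End Admissible.

Theorem lemma3p4 (R : realType) (T : finType) (v : T -> T -> R)
    (s : seq T) (X : {set T}) :
  (2 <= #|T|)%N ->
  llull v -> CLC v -> nonvanishing v ->
  admissible v s ->
  top_dominant_component v X ->
  forall x y, x != y ->
  (olt s x y -> rho v y <= rho v x) /\
      (rho v x = rho v y <-> v x y = v y x) /\
      (rho v y <= rho v x ->
         v y x <= v x y /\
         forall z, z != x -> z != y -> v y z <= v x z /\ v z x <= v z y) /\
      (rho v y < rho v x <-> v y x < v x y) /\
      (v y x < v x y -> olt s x y) /\
      (x \in X -> y \notin X -> rho v y < rho v x).
Proof.
(* #|T| >= 2 follows from x != y, CLC is witnessed by s, and nonvanishing only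
   matters for the existence of X, which is assumed here. *)
move=> _ hv _ _ adm top x y xy.
split; first exact: (rho_le_olt adm).
split; first exact: (rho_eq_iff_tie adm xy).
split; first exact: (weakly_beats_of_rho_le adm xy).
split; first exact: (rho_lt_iff adm xy).
split; first exact: (olt_of_lt adm).
exact: (rho_lt_top_component adm hv top).
Qed.
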